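(* Let $\mathcal{A}=\{\mathbf{A},\mathbf{B},\mathbf{C},\mathbf{D}\}$, let $n\ge 1$, and let $H$ be an arbitrary (simple) graph on the vertex set $\{1,\dots,n\}$. (a) Let $\mathcal{R}\subseteq\mathcal{A}\times\mathcal{A}$ be any relation satisfying: (i) $(x,y)\in\mathcal{R}\iff(y,x)\in\mathcal{R}$; (ii) $(x,y)\in\mathcal{R}\Rightarrow x\neq y$; (iii) for all $x\neq z$, if $(x,y)\in\mathcal{R}$ and $(y,z)\in\mathcal{R}$ then $(x,z)\notin\mathcal{R}$. Then every shape (with respect to $H$ and $\mathcal{R}$) is a bipartite graph. (b) Let $\mathcal{R}^\dagger$ be the symmetric relation whose related pairs are exactly $\{\mathbf{A},\mathbf{B}\}$, $\{\mathbf{B},\mathbf{D}\}$, $\{\mathbf{D},\mathbf{C}\}$ (i.e. $(x,y)\in\mathcal{R}^\dagger$ iff $\{x,y\}$ is one of these three sets). For every subset $M\subseteq\{1,\dots,n\}$ such that the graph $H'$ on $\{1,\dots,n\}$ with edge set $E_{H'}=\{\{i,j\}\in E_H: i,j\in M\}$ is bipartite, the graph $H'$ is a shape with respect to $H$ and $\mathcal{R}^\dagger$. (c) Let $\mathcal{H}$ be the following base graph on $\{1,\dots,n\}$: if $n$ is even, $\mathcal{H}$ has edges $\{\sigma(i),\sigma(i+1)\}$, $i=1,\dots,n$ (indices modulo $n$), for some permutation $\sigma$ of $\{1,\dots,n\}$ (a Hamiltonian cycle); if $n$ is odd, fix a vertex $u$ and a bijection $\sigma$ from $\{1,\dots,n-1\}$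 onto $\{1,\dots,n\}\setminus\{u\}$, and let $\mathcal{H}$ have edges $\{\sigma(i),\sigma(i+1)\}$, $i=1,\dots,n-1$ (indices modulo $n-1$), with $u$ isolated. Then every spanning subgraph $H'$ of $\mathcal{H}$ (vertex set $\{1,\dots,n\}$, edge set any subset of $E_{\mathcal{H}}$) is a shape with respect to $\mathcal{H}$ and $\mathcal{R}^\dagger$.
   Context: Sequences are elements $v=(x_1,\dots,x_n)\in\mathcal{A}^n$; the set $\mathcal{A}^n$ is viewed as the graph $Q_4^n$ in which two sequences are adjacent iff they differ in exactly one coordinate. Given a base graph $H$ on $\{1,\dots,n\}$ and a relation $\mathcal{R}\subseteq\mathcal{A}\times\mathcal{A}$, the shape of a sequence $v=(x_1,\dots,x_n)$ is the graph $H_{\mathcal{R}}(v)$ with vertex set $\{1,\dots,n\}$ and edge set $\{\{i,k\}\in E_H : (x_i,x_k)\in\mathcal{R}\}$. A graph $S$ on $\{1,\dots,n\}$ is called a shape (with respect to $H,\mathcal{R}$) if $S=H_{\mathcal{R}}(v)$ for some sequence $v\in\mathcal{A}^n$. *)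

From mathcomp Require Import all_boot all_fingroup.
Set Implicit Arguments. Unset Strict Implicit. Unset Printing Implicit Defensive.

Definition letter := 'I_4.
Definition lA : letter := @Ordinal 4 0 isT.
Definition lB : letter := @Ordinal 4 1 isT.
Definition lC : letter := @Ordinal 4 2 isT.
Definition lD : letter := @Ordinal 4 3 isT.

(* A (simple) graph on {1..n} is a symmetric irreflexive relation on 'I_n;
   a sequence in A^n is a map 'I_n -> letter. *)
Definition simple_graph n (G : rel 'I_n) := symmetric G /\ irreflexive G.

Definition shape n (H : rel 'I_n) (R : rel letter) (v : 'I_n -> letter) : rel 'I_n :=
  fun i k => H i k && R (v i) (v k).

Definition is_shape n (H : rel 'I_n) (R : rel letter) (S : rel 'I_n) :=
  exists v : 'I_n -> letter, S =2 shape H R v.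

Definition bipartite n (S : rel 'I_n) :=
  exists c : 'I_n -> bool, forall i j, S i j -> c i != c j.

Definition Rdag : rel letter := fun x y =>
  (x, y) \in [:: (lA, lB); (lB, lA); (lB, lD); (lD, lB); (lD, lC); (lC, lD)].

Definition cycle_graph m n (s : 'I_m -> 'I_n) : rel 'I_n := fun x y =>
  [exists i : 'I_m, ((x == s i) && (y == s (ordS i)))
                  || ((y == s i) && (x == s (ordS i)))].

Definition restrict n (H : rel 'I_n) (M : {set 'I_n}) : rel 'I_n :=
  fun i j => [&& H i j, i \in M & j \in M].

From Pilot Require Import Defs.
From mathcomp Require Import all_boot all_fingroup.
Set Implicit Arguments. Unset Strict Implicit. Unset Printing Implicit Defensive.

(* (a) A triangle-free relation on four letters has no odd cycle, so it is
   2-colourable, and the colouring pulled back along v colours every shape.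
   (b) Colour the two sides of M with A and B and every other vertex with C,
   which is related only to D.
   (c) Rdag is the path A - B - D - C.  If every edge of the (even) cycle is
   kept, alternate A and B.  Otherwise cut the cycle just after a dropped edge
   and walk greedily from A: a kept edge moves to a neighbour, a dropped one to
   a non-neighbour, choosing so that the walk never comes back to A or B.  The
   last letter is then unrelated to A, as the closing dropped edge requires,
   except on a 2-cycle, where the closing edge is the first one walked. *)

Lemma letter_case (P : letter -> Prop) : P lA -> P lB -> P lC -> P lD -> forall x, P x.
Proof.
move=> PA PB PC PD [m lt_m4].
do 4 (case: m lt_m4 => [|m] lt_m4; first by rewrite (bool_irrelevance lt_m4 isT)).
by [].
Qed.

Lemma triangle_free4_colorable (b01 b02 b03 b12 b13 b23 : bool) :
    ~~ [&& b01, b12 & b02] -> ~~ [&& b01, b13 & b03] ->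
    ~~ [&& b02, b23 & b03] -> ~~ [&& b12, b23 & b13] ->
  exists c1 c2 c3 : bool,
    [&& b01 ==> c1, b02 ==> c2, b03 ==> c3,
        b12 ==> (c1 != c2), b13 ==> (c1 != c3) & b23 ==> (c2 != c3)].
Proof.
case: b01; case: b02; case: b03; case: b12; case: b13; case: b23 => //= _ _ _ _;
  first [ by exists true, true, true | by exists true, true, false
        | by exists true, false, true | by exists true, false, false
        | by exists false, true, true | by exists false, true, false
        | by exists false, false, true | by exists false, false, false ].
Qed.

Lemma triangle_free_letter_rel_colorable (R : rel letter) :
    symmetric R -> (forall x y, R x y -> x != y) ->
    (forall x y z, x != z -> R x y -> R y z -> ~~ R x z) ->
  exists c : letter -> bool, forall x y, R x y -> c x != c y.
Proof.
move=> symR neqR triR.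
have no_triangle x y z : x != z -> ~~ [&& R x y, R y z & R x z].
  by move=> neq_xz; apply/negP => /and3P[Rxy Ryz]; exact/negP/(triR _ _ _ neq_xz Rxy Ryz).
have [c1 [c2 [c3 /and5P[c01 c02 c03 c12 /andP[c13 c23]]]]] := triangle_free4_colorable
  (no_triangle lA lB lC isT) (no_triangle lA lB lD isT)
  (no_triangle lA lC lD isT) (no_triangle lB lC lD isT).
pose c x := if x == lA then false else if x == lB then c1 else if x == lC then c2 else c3.
have c_lt x y : val x < val y -> R x y -> c x != c y.
  move: x y; apply: letter_case; apply: letter_case => //= _.
  all: rewrite /c /=.
  - by move/(implyP c01) ->.
  - by move/(implyP c02) ->.
  - by move/(implyP c03) ->.
  - exact: (implyP c12).
  - exact: (implyP c13).
  - exact: (implyP c23).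
exists c => x y Rxy.
case: (ltngtP (val x) (val y)) => [lt_xy | lt_yx | /val_inj eq_xy].
- exact: c_lt lt_xy Rxy.
- by rewrite eq_sym c_lt // symR.
- by move: (neqR x y Rxy); rewrite eq_xy eqxx.
Qed.

Lemma shape_bipartite n (H : rel 'I_n) (R : rel letter) (c : letter -> bool) (S : rel 'I_n) :
  (forall x y, R x y -> c x != c y) -> is_shape H R S -> bipartite S.
Proof. by move=> c_proper [v eqS]; exists (c \o v) => i j; rewrite eqS => /andP[_ /c_proper]. Qed.

Lemma bipartite_restrict_is_shape n (H : rel 'I_n) (M : {set 'I_n}) :
  bipartite (restrict H M) -> is_shape H Rdag (restrict H M).
Proof.
move=> [c c_proper].
exists (fun i => if i \in M then (if c i then lA else lB) else lC) => i j.
rewrite /Defs.shape {1}/restrict.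
case Hij: (H i j) => //=; case iM: (i \in M); case jM: (j \in M) => //=.
- have := c_proper i j; rewrite /restrict Hij iM jM => /(_ isT).
  by case: (c i); case: (c j).
- by case: (c i).
- by case: (c j).
Qed.

Lemma Rdag_sym : symmetric Rdag.
Proof. by apply: letter_case; apply: letter_case. Qed.

Lemma Rdag_lA x : Rdag x lA = (x == lB).
Proof. by move: x; apply: letter_case. Qed.

Definition Rdag_step (x : letter) (b : bool) : letter :=
  if x == lD then (if b then lC else lD)
  else if b then (if x == lA then lB else lD) else lC.

Lemma Rdag_stepP x b : Rdag x (Rdag_step x b) = b.
Proof. by move: x; apply: letter_case; case: b. Qed.

Lemma Rdag_step_neq_lA x b : Rdag_step x b != lA.
Proof. by move: x; apply: letter_case; case: b. Qed.

Lemma Rdag_step_neq_lB x b : x != lA -> Rdag_step x b != lB.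
Proof. by move: x; apply: letter_case; case: b. Qed.

Fixpoint Rdag_walk (f : nat -> bool) (t : nat) : letter :=
  if t is t'.+1 then Rdag_step (Rdag_walk f t') (f t') else lA.

Lemma Rdag_walkS f t : Rdag (Rdag_walk f t) (Rdag_walk f t.+1) = f t.
Proof. exact: Rdag_stepP. Qed.

Lemma Rdag_walk1_lA f : Rdag (Rdag_walk f 1) lA = f 0.
Proof. by rewrite Rdag_sym; exact: (Rdag_walkS f 0). Qed.

Lemma Rdag_walk_lA f t : t != 1 -> Rdag (Rdag_walk f t) lA = false.
Proof.
case: t => [|[|t]] // _.
by rewrite Rdag_lA; apply/negbTE/Rdag_step_neq_lB/Rdag_step_neq_lA.
Qed.

Lemma Rdag_alternating_cycle m (e : 'I_m -> bool) :
    ~~ odd m -> (forall i, e i) ->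
  exists w : 'I_m -> letter, forall i, Rdag (w i) (w (ordS i)) = e i.
Proof.
move=> even_m e_true; exists (fun i => if odd i then lB else lA) => i.
have odd_ordS : odd (ordS i) = ~~ odd i.
  case: (ltngtP i.+1 m) (ltn_ord i) => [lt_im _ | // | eq_im _].
    by rewrite /= modn_small.
  by move: even_m; rewrite /= eq_im modnn -{1}eq_im /= negbK => ->.
by rewrite e_true odd_ordS; case: (odd i).
Qed.

Lemma Rdag_broken_cycle m (e : 'I_m -> bool) (r : 'I_m) :
    e r = false -> (ordS (ordS r) = r -> e (ordS r) = e r) ->
  exists w : 'I_m -> letter, forall i, Rdag (w i) (w (ordS i)) = e i.
Proof.
case: m e r => [|k] e r; first by case: r.
move=> er e_2cycle; have le_rk : r <= k := ltn_ord r.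
(* [t i] is the number of steps from [ordS r] to [i] along the cycle. *)
pose t (i : 'I_k.+1) := (i + (k - r)) %% k.+1.
pose f u := e (inord ((u + r.+1) %% k.+1)).
exists (fun i => Rdag_walk f (t i)) => i.
have t_ordS : t (ordS i) = (t i).+1 %% k.+1
  by rewrite /t /= modnDml addSn -[_.+1 in RHS]addn1 modnDml addn1.
have f_t : f (t i) = e i.
  rewrite /f /t modnDml -addnA addnS subnK // modnDr modn_small //.
  by rewrite inord_val.
have t_r : t r = k by rewrite /t subnKC // modn_small.
have [lt_tk | gt_tk | eq_tk] := ltngtP (t i) k.
- by rewrite t_ordS modn_small // Rdag_walkS f_t.
- by move: (ltn_pmod (i + (k - r)) (ltn0Sn k)); rewrite ltnS leqNgt gt_tk.
have eq_ir : i = r.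
  have : t i == t r by rewrite eq_tk t_r.
  by rewrite eqn_modDr !modn_small // => /eqP/val_inj.
subst i; rewrite t_ordS t_r modnn er.
have [k1 | k_ne1] := eqVneq k 1; last exact: Rdag_walk_lA.
rewrite k1 Rdag_walk1_lA -er -e_2cycle.
  by congr e; apply: val_inj; rewrite /= inordK // ltn_pmod.
by apply: val_inj => /=; move: (val r) le_rk; rewrite k1 => -[|[|]].
Qed.

Lemma Rdag_cycle_walk m (E : rel 'I_m) :
    symmetric E -> ~~ odd m ->
  exists w : 'I_m -> letter, forall i, Rdag (w i) (w (ordS i)) = E i (ordS i).
Proof.
move=> symE even_m.
have [/forallP E_all | /forallPn[r /negbTE E_r]] := boolP [forall i, E i (ordS i)].
  exact: Rdag_alternating_cycle.
apply: (@Rdag_broken_cycle _ (fun i => E i (ordS i)) r) => // ordS2_r.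
by rewrite ordS2_r symE.
Qed.

Lemma cycle_subgraph_is_shape n m (s : 'I_m -> 'I_n) (H' : rel 'I_n) :
    injective s -> ~~ odd m -> symmetric H' -> subrel H' (cycle_graph s) ->
  is_shape (cycle_graph s) Rdag H'.
Proof.
move=> inj_s even_m symH' subH'.
have [w w_cycle] := @Rdag_cycle_walk m (fun i j => H' (s i) (s j)) (fun i j => symH' _ _) even_m.
have pick_s i : [pick j | s j == s i] = Some i.
  by case: pickP => [j /eqP/inj_s -> // | /(_ i)]; rewrite eqxx.
exists (fun x => if [pick i | s i == x] is Some i then w i else lA) => x y.
rewrite /Defs.shape.
have [/existsP[i /orP[] /andP[/eqP-> /eqP->]] | not_xy] := boolP (cycle_graph s x y).
- by rewrite /= !pick_s w_cycle.
- by rewrite /= !pick_s symH' Rdag_sym w_cycle.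
by apply/negbTE/negP => /subH'; apply/negP.
Qed.

Theorem lemma1 (n : nat) (hn : 0 < n) (H : rel 'I_n) (HH : simple_graph H) :
  (* (a) *)
  (forall R : rel letter,
     (forall x y, R x y = R y x) ->
     (forall x y, R x y -> x != y) ->
     (forall x y z, x != z -> R x y -> R y z -> ~~ R x z) ->
     forall S : rel 'I_n, is_shape H R S -> bipartite S)
  /\
  (* (b) *)
  (forall M : {set 'I_n}, bipartite (restrict H M) -> is_shape H Rdag (restrict H M))
  /\
  (* (c) *)
  ((~~ odd n ->
    forall sigma : {perm 'I_n},
    forall H' : rel 'I_n, symmetric H' ->
      (forall i j, H' i j -> cycle_graph sigma i j) ->
      is_shape (cycle_graph sigma) Rdag H')
   /\
   (odd n ->
    forall (u : 'I_n) (sigma : 'I_n.-1 -> 'I_n),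
      injective sigma -> (forall i, sigma i != u) ->
    forall H' : rel 'I_n, symmetric H' ->
      (forall i j, H' i j -> cycle_graph sigma i j) ->
      is_shape (cycle_graph sigma) Rdag H')).
Proof.
split.
  move=> R symR neqR triR S.
  have [c c_proper] := triangle_free_letter_rel_colorable symR neqR triR.
  exact: shape_bipartite c_proper.
split; first exact: bipartite_restrict_is_shape.
split=> [even_n sigma H' | odd_n u sigma inj_sigma _ H'].
  exact: cycle_subgraph_is_shape (@perm_inj _ sigma) even_n.
apply: cycle_subgraph_is_shape inj_sigma _.
by rewrite -(prednK hn) in odd_n.
Qed.
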